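(* Let $X=[0,\infty)\subset\mathbb{R}$ and $\mathcal{A}=\{\alpha_1,\dots,\alpha_m\}\subset\mathbb{R}$ with $\alpha_1<\cdots<\alpha_m$; identify $\mathbb{R}^{\mathcal{A}}$ with $\mathbb{R}^m$ with standard basis $\delta_1,\dots,\delta_m$. Then the set of normalized reduced $[0,\infty)$-circuits of $\mathcal{A}$ is \[\Lambda^\star_{[0,\infty)}(\mathcal{A})=\{\delta_2-\delta_1\}\cup\Big\{\frac{\alpha_{i+1}-\alpha_i}{\alpha_{i+1}-\alpha_{i-1}}\delta_{i-1}+\frac{\alpha_i-\alpha_{i-1}}{\alpha_{i+1}-\alpha_{i-1}}\delta_{i+1}-\delta_i\ :\ 1<i<m\Big\}\] (for $m\ge2$).
   Context: For a nonempty closed convex $X\subset\mathbb{R}^n$ and nonempty finite $\mathcal{A}\subset\mathbb{R}^n$: $\mathcal{A}\nu=\sum_\alpha\alpha\nu_\alpha$ for $\nu\in\mathbb{R}^{\mathcal{A}}$; $\sigma_X(y)=\sup\{y^Tx:x\in X\}\in\mathbb{R}\cup\{+\infty\}$; for $\beta\in\mathcal{A}$, $N_\beta=\{\nu\in\mathbb{R}^{\mathcal{A}}:\nu_\alpha\ge0\ \forall\alpha\neq\beta,\ \sum_\alpha\nu_\alpha=0\}$. A vector $\nu^\star\in N_\beta$ is an $X$-circuit of $\mathcal{A}$ if (1) $\nu^\star\neq0$, (2) $\sigma_X(-\mathcal{A}\nu^\star)<\infty$, and (3) $\nu^\star$ cannot be written as a convex combination of two non-proportional vectors $\nu^{(1)},\nu^{(2)}\in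 N_\beta$ such that the map $\nu\mapsto\sigma_X(-\mathcal{A}\nu)$ is affine on the segment $[\nu^{(1)},\nu^{(2)}]$. $\Lambda_X(\mathcal{A})$ is the set of all $X$-circuits normalized so that the unique negative entry equals $-1$. The functional form of $\lambda\in\Lambda_X(\mathcal{A})$ is $\phi_\lambda=(\lambda,\sigma_X(-\mathcal{A}\lambda))\in\mathbb{R}^{\mathcal{A}}\times\mathbb{R}$; the circuit graph is $G_X(\mathcal{A})=\operatorname{cone}(\{\phi_\lambda:\lambda\in\Lambda_X(\mathcal{A})\}\cup\{(0,1)\})$; and the normalized reduced $X$-circuits $\Lambda_X^\star(\mathcal{A})$ are those $\lambda\in\Lambda_X(\mathcal{A})$ for which $\{t\phi_\lambda:t\ge0\}$ is an extreme ray of $G_X(\mathcal{A})$. *)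

From HB Require Import structures.
From mathcomp Require Import all_boot all_order all_algebra.
From mathcomp Require Import all_classical all_reals ereal.
Set Implicit Arguments. Unset Strict Implicit. Unset Printing Implicit Defensive.
Import Order.TTheory GRing.Theory Num.Theory.
Local Open Scope ring_scope.
Local Open Scope classical_set_scope.

(* Ambient dimension n = 1: X is a subset of R, the finite support set
   A = {alpha_1,...,alpha_m} is given by an indexing alpha : 'I_m -> R,
   and R^A is identified with functions 'I_m -> R. *)

Section Circuits.
Variables (R : realType) (m : nat).
Implicit Types (X : set R) (alpha : 'I_m -> R) (nu : 'I_m -> R).

Definition Amul alpha nu : R := \sum_(a < m) alpha a * nu a.

Definition sigma X (y : R) : \bar R := ereal_sup [set (y * x)%:E | x in X].

Definition sigmaA X alpha nu : \bar R := sigma X (- Amul alpha nu).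

Definition Ncone (beta : 'I_m) : set ('I_m -> R) :=
  [set nu | (forall a, a != beta -> 0 <= nu a) /\ \sum_(a < m) nu a = 0].

Definition seg_point (nu1 nu2 : 'I_m -> R) (t : R) : 'I_m -> R :=
  fun a => (1 - t) * nu1 a + t * nu2 a.

Definition proportional (nu1 nu2 : 'I_m -> R) : Prop :=
  (exists c : R, nu1 = (fun a => c * nu2 a)) \/
  (exists c : R, nu2 = (fun a => c * nu1 a)).

Definition affine_on_segment X alpha (nu1 nu2 : 'I_m -> R) : Prop :=
  exists c0 c1 : R, forall t : R, 0 <= t <= 1 ->
    sigmaA X alpha (seg_point nu1 nu2 t) = (c0 + c1 * t)%:E.

Definition is_circuit X alpha (beta : 'I_m) (nu : 'I_m -> R) : Prop :=
  [/\ Ncone beta nu,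
      nu <> (fun _ => 0),
      (sigmaA X alpha nu < +oo)%E &
      ~ (exists (nu1 nu2 : 'I_m -> R) (t : R),
           [/\ Ncone beta nu1 /\ Ncone beta nu2, 0 < t < 1,
               ~ proportional nu1 nu2,
               nu = seg_point nu1 nu2 t &
               affine_on_segment X alpha nu1 nu2])].

Definition Lambda X alpha : set ('I_m -> R) :=
  [set nu | exists beta, is_circuit X alpha beta nu /\ nu beta = -1].

Definition functional_form X alpha (lam : 'I_m -> R) : ('I_m -> R) * R :=
  (lam, fine (sigmaA X alpha lam)).

Definition cone (S : set (('I_m -> R) * R)) : set (('I_m -> R) * R) :=
  [set p | exists (k : nat) (c : 'I_k -> R) (s : 'I_k -> ('I_m -> R) * R),
     [/\ forall i, 0 <= c i, forall i, S (s i),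
         p.1 = (fun a => \sum_(i < k) c i * (s i).1 a) &
         p.2 = \sum_(i < k) c i * (s i).2]].

Definition circuit_graph X alpha : set (('I_m -> R) * R) :=
  cone ([set functional_form X alpha lam | lam in Lambda X alpha]
        `|` [set ((fun _ => 0), 1)]).

Definition ray (p : ('I_m -> R) * R) : set (('I_m -> R) * R) :=
  [set q | exists t : R, 0 <= t /\ q = ((fun a => t * p.1 a), t * p.2)].

Definition padd (p q : ('I_m -> R) * R) : ('I_m -> R) * R :=
  ((fun a => p.1 a + q.1 a), p.2 + q.2).

Definition extreme_ray (C : set (('I_m -> R) * R)) (p : ('I_m -> R) * R) : Prop :=
  [/\ p <> ((fun _ => 0), 0), ray p `<=` C &
      forall x y, C x -> C y -> ray p (padd x y) -> ray p x /\ ray p y].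

Definition Lambda_star X alpha : set ('I_m -> R) :=
  [set lam | Lambda X alpha lam /\
             extreme_ray (circuit_graph X alpha) (functional_form X alpha lam)].

Definition delta (i : 'I_m) : 'I_m -> R := fun j => if j == i then 1 else 0.

End Circuits.
Arguments delta {R m} i _.

From HB Require Import structures.
From mathcomp Require Import all_boot all_order all_algebra.
From mathcomp Require Import all_classical all_reals ereal.
From mathcomp Require Import ring lra zify.
Set Implicit Arguments. Unset Strict Implicit. Unset Printing Implicit Defensive.
Import Order.TTheory GRing.Theory Num.Theory.
Local Open Scope ring_scope.
Local Open Scope classical_set_scope.

(* For X = [0,oo) the support function is sigma_X(y) = 0 for y <= 0 and +oo
   for y > 0; hence sigma_X(-A nu) is finite iff A nu >= 0, and then it is 0,
   so every functional form has last coordinate 0.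

   Index the points as alpha_0 < ... < alpha_m.  The hinge coordinates
   H_j(nu) = sum_a nu_a (alpha_a - alpha_j)_+  (j < m), together with the mass
   sum_a nu_a, determine nu, and they are nonnegative on every vector of N_beta
   with A nu >= 0.  The vectors gen_k (delta_1 - delta_0 for k = 0, the
   balanced three-term vectors centred at alpha_k for 0 < k < m) form the dual
   basis: H_j(gen_k) = 0 for j <> k and H_k(gen_k) > 0.  So the cone
   K = {nu | sum nu = 0, H_j(nu) >= 0} is simplicial with extreme rays spanned
   by the gen_k, and it contains the circuit graph (in its first component).
   Consequently each gen_k is a circuit spanning an extreme ray of the circuit
   graph; conversely a reduced circuit is a nonnegative combination of the
   gen_k, extremality leaves a single term, and the normalization at the
   negative entry makes it equal to gen_k. *)

Section HalfLineSupport.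
Variable R : realType.

Lemma sigma_halfline_nonpos (y : R) : y <= 0 -> sigma [set x : R | 0 <= x] y = 0%E.
Proof.
move=> hy; apply/eqP; rewrite eq_le; apply/andP; split.
  apply: ge_ereal_sup => _ [x hx <-]; rewrite lee_fin.
  by rewrite /= in hx; nra.
by apply: le_ereal_sup_tmp; exists 0%E => //; exists 0 => //=; rewrite mulr0.
Qed.

Lemma sigma_halfline_pos (y : R) : 0 < y -> sigma [set x : R | 0 <= x] y = +oo%E.
Proof.
move=> hy.
have unbounded (r : R) : (r%:E <= sigma [set x : R | (0 <= x)%R] y)%E.
  apply: le_ereal_sup_tmp; exists (`|r|%:E); last by rewrite lee_fin ler_norm.
  exists (`|r| / y); first by rewrite /= divr_ge0 // ltW.
  by rewrite mulrC -mulrA mulVf ?mulr1 // gt_eqF.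
move: unbounded; case: (sigma _ y) => //.
  by move=> r /(_ (r + 1)); rewrite lee_fin => h; exfalso; lra.
by move=> /(_ 0); rewrite leeNy_eq.
Qed.

End HalfLineSupport.

Section HalfLineCircuits.
Variables (R : realType) (m : nat) (alpha : 'I_m.+1 -> R).
Hypothesis alpha_incr : forall i j : 'I_m.+1, (i < j)%N -> alpha i < alpha j.

Local Notation X := [set x : R | 0 <= x].

Lemma sigmaA_halfline nu : 0 <= Amul alpha nu -> sigmaA X alpha nu = 0%E.
Proof. by move=> h; rewrite /sigmaA sigma_halfline_nonpos // oppr_le0. Qed.

Lemma sigmaA_halfline_finite nu :
  (sigmaA X alpha nu < +oo)%E -> 0 <= Amul alpha nu.
Proof.
move=> h; rewrite leNgt; apply/negP => hlt; move: h.
by rewrite /sigmaA sigma_halfline_pos ?ltxx // oppr_gt0.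
Qed.

Definition al (n : nat) : R := alpha (inord n).
Definition dN (n : nat) (a : 'I_m.+1) : R := if val a == n then 1 else 0.

Lemma al_lt i j : (i < j)%N -> (j <= m)%N -> al i < al j.
Proof.
move=> hij hj; apply: alpha_incr; rewrite (@inordK m i); last lia.
by rewrite (@inordK m j); lia.
Qed.

Lemma al_le i j : (i <= j)%N -> (j <= m)%N -> al i <= al j.
Proof. by rewrite leq_eqVlt => /orP[/eqP -> //|hij] hj; exact/ltW/al_lt. Qed.

Lemma alpha_al (a : 'I_m.+1) : alpha a = al a.
Proof. by rewrite /al inord_val. Qed.

Lemma eq_inord (a : 'I_m.+1) n : (n <= m)%N -> (a == inord n) = (val a == n).
Proof.
move=> hn; apply/eqP/eqP => [->|h]; first by rewrite /= inordK.
by apply: val_inj; rewrite /= inordK.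
Qed.

Definition pairing (w nu : 'I_m.+1 -> R) : R := \sum_a nu a * w a.

Lemma pairing_comb w (x y : R) u v :
  pairing w (fun a => x * u a + y * v a) = x * pairing w u + y * pairing w v.
Proof.
rewrite /pairing !mulr_sumr -big_split; apply: eq_bigr => a _ /=.
by rewrite mulrDl !mulrA.
Qed.

Lemma pairing_scale w (x : R) u : pairing w (fun a => x * u a) = x * pairing w u.
Proof. by rewrite /pairing mulr_sumr; apply: eq_bigr => a _; rewrite mulrA. Qed.

Lemma pairing_big w (I : finType) (c : I -> R) (g : I -> 'I_m.+1 -> R) :
  pairing w (fun a => \sum_i c i * g i a) = \sum_i c i * pairing w (g i).
Proof.
rewrite /pairing; under eq_bigr do rewrite mulr_suml.
rewrite exchange_big; apply: eq_bigr => i _; rewrite mulr_sumr.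
by apply: eq_bigr => a _; rewrite mulrA.
Qed.

Lemma sum_pairing nu : \sum_a nu a = pairing (fun _ => 1) nu.
Proof. by apply: eq_bigr => a _; rewrite mulr1. Qed.

Lemma Amul_pairing nu : Amul alpha nu = pairing alpha nu.
Proof. by apply: eq_bigr => a _; rewrite mulrC. Qed.

Lemma pairing_dN n w : (n <= m)%N -> pairing w (dN n) = w (inord n).
Proof.
move=> hn; rewrite /pairing (bigD1 (inord n)) //= big1 ?addr0.
  by rewrite /dN /= inordK // eqxx mul1r.
by move=> a; rewrite eq_inord // /dN => /negbTE ->; rewrite mul0r.
Qed.

Definition hinge (p x : R) : R := if p <= x then x - p else 0.

Local Notation hcoord j := (pairing (fun a => hinge (al j) (alpha a))).

Lemma hinge_al i j : (i <= m)%N -> (j <= m)%N ->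
  hinge (al j) (al i) = if (j <= i)%N then al i - al j else 0.
Proof.
move=> hi hj; rewrite /hinge; case: leqP => h; first by rewrite al_le.
by rewrite leNgt al_lt.
Qed.

Lemma hinge_support (p x y : R) :
  (if p <= y then 1 else 0) * (x - y) + hinge p y <= hinge p x.
Proof.
rewrite /hinge; case: ifP => hy; case: ifP => hx.
- lra.
- by move/negbT: hx; rewrite -ltNge => hx; lra.
- by move/negbT: hy; rewrite -ltNge => hy; lra.
- lra.
Qed.

Definition hinge_cone nu : Prop := \sum_a nu a = 0 /\ forall j, 0 <= hcoord j nu.

(* Every N_beta-vector with A nu >= 0 lies in K: compare the hinge at each
   alpha_a with its supporting line at the negative entry alpha_beta. *)
Lemma Ncone_hinge_cone beta nu :
  Ncone beta nu -> 0 <= Amul alpha nu -> hinge_cone nu.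
Proof.
move=> [hnn hs] hA; split => // j; rewrite /pairing.
set p := al j; set s := (if p <= alpha beta then 1 else 0 : R).
have s0 : 0 <= s by rewrite /s; case: ifP.
apply: (@le_trans _ _
  (\sum_a (s * (nu a * alpha a) + (- s * alpha beta + hinge p (alpha beta)) * nu a))).
  rewrite big_split /= -!mulr_sumr hs mulr0 addr0.
  by apply: mulr_ge0 => //; move: hA; rewrite Amul_pairing.
apply: ler_sum => a _; have [->|hab] := eqVneq a beta.
  by rewrite /s; case: ifP; lra.
have := hinge_support p (alpha a) (alpha beta); rewrite -/s => h.
have := hnn a hab; nra.
Qed.

Lemma hinge_cone_big (I : finType) (c : I -> R) (g : I -> 'I_m.+1 -> R) :
  (forall i, 0 <= c i) -> (forall i, hinge_cone (g i)) ->
  hinge_cone (fun a => \sum_i c i * g i a).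
Proof.
move=> c0 hg; split.
  rewrite sum_pairing pairing_big big1 // => i _.
  by rewrite -sum_pairing (hg i).1 mulr0.
move=> j; rewrite pairing_big; apply: sumr_ge0 => i _.
exact: mulr_ge0 (c0 i) ((hg i).2 j).
Qed.

(* The mass and the hinge coordinates H_0, ..., H_(m-1) determine a vector:
   H_(a-1) only sees the entries at indices >= a, so a descending induction
   kills the entries of index > 0, and the mass kills the entry at 0. *)
Lemma hcoord_inj u : \sum_a u a = 0 ->
  (forall j, (j < m)%N -> hcoord j u = 0) -> u = (fun _ => 0).
Proof.
move=> hs hH.
have high n (a : 'I_m.+1) : (m.+1 <= a + n)%N -> (0 < a)%N -> u a = 0.
  elim: n a => [|n IH] a ha a0; first by have := ltn_ord a; lia.
  case: (leqP m.+1 (a + n)) => h; first exact: IH.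
  have hj : (a.-1 < m)%N by have := ltn_ord a; lia.
  have := hH _ hj; rewrite /pairing (bigD1 a) //= big1 ?addr0.
    rewrite alpha_al hinge_al; try lia.
    rewrite (_ : (a.-1 <= a)%N); last lia.
    move/eqP; rewrite mulf_eq0 subr_eq0 => /orP[/eqP //|/eqP e].
    by have := @al_lt a.-1 a; rewrite e ltxx; lia.
  move=> b hb; case: (ltngtP b a) => hba.
  - rewrite alpha_al hinge_al; try lia.
    case: leqP => hh; last by rewrite mulr0.
    by rewrite (_ : nat_of_ord b = a.-1) ?subrr ?mulr0 //; lia.
  - by rewrite IH ?mul0r //; lia.
  - by move: hb; rewrite (val_inj hba) eqxx.
apply/funext => a; case: (posnP a) => a0; last by apply: (high m.+1) => //; lia.
move: hs; rewrite (bigD1 a) //= big1 ?addr0 // => b hb.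
apply: (high m.+1); first lia.
rewrite lt0n; apply: contra hb => /eqP b0.
by apply/eqP/val_inj; rewrite /= b0 a0.
Qed.

Definition gen (k : nat) : 'I_m.+1 -> R := fun a =>
  if k == 0%N then dN 1 a - dN 0 a else
  (al k.+1 - al k) / (al k.+1 - al k.-1) * dN k.-1 a
  + (al k - al k.-1) / (al k.+1 - al k.-1) * dN k.+1 a - dN k a.

Lemma pairing_gen k w : (k < m)%N ->
  pairing w (gen k) =
  if k == 0%N then w (inord 1) - w (inord 0) else
  (al k.+1 - al k) / (al k.+1 - al k.-1) * w (inord k.-1)
  + (al k - al k.-1) / (al k.+1 - al k.-1) * w (inord k.+1) - w (inord k).
Proof.
move=> hk; rewrite /pairing /gen; have [k0|k0] := eqVneq k 0%N.
  subst k; under eq_bigr do rewrite mulrBl.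
  by rewrite sumrB -!/(pairing w _) !pairing_dN.
under eq_bigr do rewrite mulrBl mulrDl -!mulrA.
rewrite sumrB big_split -!mulr_sumr /= -!/(pairing w _) !pairing_dN ?mulrA //; lia.
Qed.

Lemma gen_sum0 k : (k < m)%N -> \sum_a gen k a = 0.
Proof.
move=> hk; rewrite sum_pairing pairing_gen //; case: eqP => k0; first by rewrite subrr.
have : al k.-1 < al k.+1 by apply: al_lt; lia.
by move=> h; field; rewrite subr_eq0; apply/eqP => e; move: h; rewrite e ltxx.
Qed.

(* gen_k is balanced: A gen_k = 0 for k > 0, and A gen_0 > 0. *)
Lemma gen_Amul_ge0 k : (k < m)%N -> 0 <= Amul alpha (gen k).
Proof.
move=> hk; rewrite Amul_pairing pairing_gen //; case: eqP => k0.
  by rewrite subr_ge0 -!/(al _); apply: al_le; lia.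
have h : al k.-1 < al k.+1 by apply: al_lt; lia.
rewrite -!/(al _) (_ : _ - al k = 0) //.
by field; rewrite subr_eq0; apply/eqP => e; move: h; rewrite e ltxx.
Qed.

Lemma gen_at k : (k < m)%N -> gen k (inord k) = -1.
Proof.
move=> hk; rewrite /gen /dN /= !inordK; try lia.
case: eqP => k0; first by subst k; rewrite /= sub0r.
rewrite (_ : (k == k.-1) = false); last by apply/eqP; lia.
rewrite (_ : (k == k.+1) = false); last by apply/eqP; lia.
by rewrite eqxx !mulr0 add0r sub0r.
Qed.

Lemma gen_ge0 k (a : 'I_m.+1) : (k < m)%N -> val a != k -> 0 <= gen k a.
Proof.
move=> hk ha; rewrite /gen /dN (negbTE ha); case: eqP => k0.
  by subst k; rewrite (negbTE ha) subr0; case: ifP.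
have hl : al k.-1 < al k by apply: al_lt; lia.
have hr : al k < al k.+1 by apply: al_lt; lia.
rewrite subr0; apply: addr_ge0; apply: mulr_ge0; try by case: ifP.
  all: by apply: divr_ge0; lra.
Qed.

Lemma gen_neq0 k : (k < m)%N -> gen k <> (fun _ => 0).
Proof.
by move=> hk /(congr1 (fun f => f (inord k))); rewrite /= gen_at // => /eqP;
  rewrite oppr_eq0 oner_eq0.
Qed.

Lemma hcoord_al j nu : hcoord j nu = pairing (fun a => hinge (al j) (al a)) nu.
Proof. by apply: eq_bigr => a _; rewrite alpha_al. Qed.

Lemma hcoord_gen_pos k : (k < m)%N -> 0 < hcoord k (gen k).
Proof.
move=> hk; rewrite hcoord_al pairing_gen // !inordK; try lia.
rewrite !hinge_al; try lia.
case: eqP => k0; first by subst k; rewrite /= subrr subr0 subr_gt0; apply: al_lt.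
have hl : al k.-1 < al k by apply: al_lt; lia.
have hr : al k < al k.+1 by apply: al_lt; lia.
rewrite (_ : (k <= k.-1)%N = false); last lia.
rewrite leqnn ltnW // mulr0 add0r subrr subr0.
by apply: mulr_gt0; [apply: divr_gt0|]; lra.
Qed.

Lemma hcoord_gen_off j k : (j < m)%N -> (k < m)%N -> j != k ->
  hcoord j (gen k) = 0.
Proof.
move=> hj hk hjk; rewrite hcoord_al pairing_gen // !inordK; try lia.
rewrite !hinge_al; try lia.
case: eqP => k0.
  subst k; case: (leqP j 1) => h1.
    by rewrite (_ : j = 1%N) ?subrr ?ltnn ?subr0 //; lia.
  by rewrite (_ : (j <= 0)%N = false) ?subr0 //; lia.
have hl : al k.-1 < al k by apply: al_lt; lia.
have hr : al k < al k.+1 by apply: al_lt; lia.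
case: (ltnP j k) => h.
  rewrite (_ : (j <= k.-1)%N = true); last lia.
  rewrite (_ : (j <= k.+1)%N = true); last lia.
  rewrite (_ : (j <= k)%N = true); last lia.
  have hne : al k.+1 - al k.-1 != 0 by rewrite subr_eq0 gt_eqF // (lt_trans hl hr).
  by field.
rewrite (_ : (j <= k.-1)%N = false); last lia.
rewrite (_ : (j <= k)%N = false); last lia.
case: (leqP j k.+1) => h2; last by rewrite !mulr0 !addr0 subr0.
by rewrite (_ : j = k.+1) ?subrr ?mulr0 ?addr0 ?subr0 //; lia.
Qed.

Definition coef (k : nat) nu : R := hcoord k nu / hcoord k (gen k).

Lemma coef_ge0 k nu : (k < m)%N -> hinge_cone nu -> 0 <= coef k nu.
Proof. by move=> hk [_ h]; apply: divr_ge0 => //; exact/ltW/hcoord_gen_pos. Qed.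

Lemma gen_decomp nu : \sum_a nu a = 0 ->
  nu = (fun a => \sum_(k < m) coef k nu * gen k a).
Proof.
move=> hs; set d := fun a => _.
suff hz : (fun a => 1 * nu a + (-1) * d a) = (fun _ => 0).
  apply/funext => a; have /eqP := congr1 (fun f => f a) hz.
  by rewrite /= mul1r mulN1r subr_eq0 => /eqP.
apply: hcoord_inj.
  rewrite sum_pairing pairing_comb pairing_big -sum_pairing hs big1 ?mulr0 ?addr0 //.
  by move=> k _; rewrite -sum_pairing gen_sum0 ?mulr0.
move=> j hj; rewrite pairing_comb pairing_big (bigD1 (Ordinal hj)) //= big1 ?addr0.
  by rewrite /coef divfK ?gt_eqF ?hcoord_gen_pos // mul1r mulN1r subrr.
move=> k hk; rewrite hcoord_gen_off ?mulr0 //.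
by apply: contra hk => /eqP e; apply/eqP/val_inj.
Qed.

Lemma gen_single k nu : (k < m)%N -> \sum_a nu a = 0 ->
  (forall j, (j < m)%N -> j != k -> hcoord j nu = 0) ->
  nu = (fun a => coef k nu * gen k a).
Proof.
move=> hk hs hz; rewrite [LHS](gen_decomp hs); apply/funext => a.
rewrite (bigD1 (Ordinal hk)) //= big1 ?addr0 // => l hl.
rewrite /coef hz ?mul0r //; apply: contra hl => /eqP e; exact/eqP/val_inj.
Qed.

(* gen_k spans an extreme ray of K: if a positive combination of two vectors
   of K is a multiple of gen_k, both are multiples of gen_k. *)
Lemma gen_face k u v (x y s : R) : (k < m)%N -> 0 < x -> 0 < y ->
  hinge_cone u -> hinge_cone v ->
  (fun a => x * u a + y * v a) = (fun a => s * gen k a) ->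
  u = (fun a => coef k u * gen k a) /\ v = (fun a => coef k v * gen k a).
Proof.
move=> hk hx hy [su Hu] [sv Hv] e.
have off j : (j < m)%N -> j != k -> hcoord j u = 0 /\ hcoord j v = 0.
  move=> hj hjk; have := congr1 (hcoord j) e.
  rewrite pairing_comb pairing_scale hcoord_gen_off // mulr0 => h.
  by have := Hu j; have := Hv j; split; nra.
by split; apply: gen_single => // j hj hjk; have [] := off j hj hjk.
Qed.

(* Affinity on a segment forces finiteness, hence A nu >= 0, at both ends. *)
Lemma affine_on_segment_Amul nu1 nu2 : affine_on_segment X alpha nu1 nu2 ->
  0 <= Amul alpha nu1 /\ 0 <= Amul alpha nu2.
Proof.
move=> [c0 [c1 h]].
have e0 : seg_point nu1 nu2 0 = nu1.
  by apply/funext => a; rewrite /seg_point subr0 mul1r mul0r addr0.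
have e1 : seg_point nu1 nu2 1 = nu2.
  by apply/funext => a; rewrite /seg_point subrr mul1r mul0r add0r.
split; apply: sigmaA_halfline_finite.
  by rewrite -e0 h ?ltry // lexx ler01.
by rewrite -e1 h ?ltry // lexx ler01.
Qed.

Lemma gen_circuit k : (k < m)%N -> is_circuit X alpha (inord k) (gen k).
Proof.
move=> hk; split.
- split; last exact: gen_sum0.
  move=> a ha; apply: gen_ge0 => //; apply: contra ha => /eqP e.
  by apply/eqP/val_inj; rewrite /= inordK //; lia.
- exact: gen_neq0.
- by rewrite sigmaA_halfline ?gen_Amul_ge0 // ltry.
move=> [nu1 [nu2 [t [[N1 N2] /andP[t0 t1] nprop e ha]]]].
have [A1 A2] := affine_on_segment_Amul ha.
have [] := @gen_face k nu1 nu2 (1 - t) t 1 hk _ t0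
  (Ncone_hinge_cone N1 A1) (Ncone_hinge_cone N2 A2).
- by rewrite subr_gt0.
- by rewrite e; apply/funext => a; rewrite mul1r.
set c1 := coef k nu1; set c2 := coef k nu2 => h1 h2; apply: nprop.
have [c20|c2n0] := eqVneq c2 0.
  by right; exists 0; apply/funext => a; rewrite h2 c20 !mul0r.
by left; exists (c1 / c2); apply/funext => a; rewrite h1 h2 mulrA divfK.
Qed.

Lemma gen_Lambda k : (k < m)%N -> Lambda X alpha (gen k).
Proof. by move=> hk; exists (inord k); split; [exact: gen_circuit|exact: gen_at]. Qed.

Lemma Lambda_hinge_cone lam : Lambda X alpha lam ->
  hinge_cone lam /\ functional_form X alpha lam = (lam, 0).
Proof.
move=> [beta [[hN _ hlt _] _]]; have hA := sigmaA_halfline_finite hlt.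
split; first exact: Ncone_hinge_cone hN hA.
by rewrite /functional_form sigmaA_halfline.
Qed.

Lemma circuit_graph_hinge_cone p : circuit_graph X alpha p ->
  hinge_cone p.1 /\ 0 <= p.2.
Proof.
move=> [n [c [s [c0 hS -> ->]]]].
have hs i : hinge_cone (s i).1 /\ 0 <= (s i).2.
  case: (hS i) => [[lam /Lambda_hinge_cone [hK hff] <-]|->]; first by rewrite hff.
  split => //=; split => [|j]; first by rewrite big1.
  by rewrite /pairing big1 // => a _; rewrite mul0r.
split; first by apply: hinge_cone_big => // i; have [] := hs i.
by apply: sumr_ge0 => i _; apply: mulr_ge0 => //; have [] := hs i.
Qed.

Lemma gen_cone (c : 'I_m -> R) : (forall k, 0 <= c k) ->
  circuit_graph X alpha ((fun a => \sum_(k < m) c k * gen k a), 0).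
Proof.
move=> c0; exists m, c, (fun k => functional_form X alpha (gen k)).
split => //=.
- by move=> k; left; exists (gen k) => //; exact: gen_Lambda.
- by rewrite big1 // => k _; rewrite sigmaA_halfline ?gen_Amul_ge0 // mulr0.
Qed.

Lemma gen_cone_single (k : 'I_m) (c : R) : 0 <= c ->
  circuit_graph X alpha ((fun a => c * gen k a), 0).
Proof.
move=> c0; have := @gen_cone (fun l => if l == k then c else 0).
rewrite (_ : (fun a => _) = (fun a => c * gen k a)).
  by apply => l; case: ifP.
apply/funext => a; rewrite (bigD1 k) //= eqxx big1 ?addr0 // => l /negbTE ->.
exact: mul0r.
Qed.

Lemma gen_extreme k : (k < m)%N ->
  extreme_ray (circuit_graph X alpha) (functional_form X alpha (gen k)).
Proof.
move=> hk; have [_ ->] := Lambda_hinge_cone (gen_Lambda hk); split.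
- by move=> /(congr1 fst) /=; exact: gen_neq0.
- by move=> q [t [t0 ->]]; rewrite mulr0; exact: (@gen_cone_single (Ordinal hk)).
move=> [x1 x2] [y1 y2] /circuit_graph_hinge_cone [Kx x20]
  /circuit_graph_hinge_cone [Ky y20] [t [_ [e1 e2]]] /=.
rewrite mulr0 in e2; rewrite /= in Kx x20 Ky y20.
have e : (fun a => 1 * x1 a + 1 * y1 a) = (fun a => t * gen k a).
  by rewrite -e1; apply/funext => a; rewrite !mul1r.
have [hx hy] := gen_face hk ltr01 ltr01 Kx Ky e.
have [-> ->] : x2 = 0 /\ y2 = 0 by split; lra.
split; [exists (coef k x1) | exists (coef k y1)].
  by split; [exact: coef_ge0 | rewrite /= mulr0 -hx].
by split; [exact: coef_ge0 | rewrite /= mulr0 -hy].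
Qed.

Lemma Lambda_star_gen lam : Lambda_star X alpha lam -> exists k : 'I_m, lam = gen k.
Proof.
move=> [hL [_ _ hext]]; have [hK hff] := Lambda_hinge_cone hL.
have [beta [[hN hne _ _] hb]] := hL.
set c := fun k : 'I_m => coef k lam.
have c0 k : 0 <= c k by exact: coef_ge0.
have dec : lam = (fun a => \sum_(k < m) c k * gen k a) := gen_decomp hK.1.
have [k ck] : exists k, c k != 0.
  case/boolP: [exists k, c k != 0] => [/existsP //|/existsPn call]; case: hne.
  by rewrite dec; apply/funext => a; rewrite big1 // => k _; rewrite (eqP (negPn (call k))) mul0r.
pose c' l := if l == k then 0 else c l.
have c'0 l : 0 <= c' l by rewrite /c'; case: ifP.
have hxy : ray (functional_form X alpha lam)
    (padd ((fun a => c k * gen k a), 0) ((fun a => \sum_l c' l * gen l a), 0)).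
  exists 1; split => //; rewrite hff /padd /=; congr pair; last by rewrite mulr0 addr0.
  apply/funext => a; rewrite mul1r [in RHS]dec [in RHS](bigD1 k) //=.
  congr (_ + _); rewrite (bigD1 k) //= /c' eqxx mul0r add0r.
  apply: eq_bigr => l hl.
  by rewrite (negbTE hl).
have [[t [t0 ex]] _] := hext _ _ (gen_cone_single k (c0 k))
  (gen_cone c'0) hxy.
move: ex; rewrite hff => -[ex _].
have at_k := congr1 (fun f => f (inord k)) ex; rewrite /= gen_at // mulrN1 in at_k.
have cpos : 0 < c k by rewrite lt_def ck c0.
have hkb : inord k = beta.
  apply/eqP; apply: contraT => /(hN.1 _) h.
  by have := mulr_ge0 t0 h; rewrite -at_k oppr_ge0 leNgt cpos.
rewrite hkb hb mulrN1 in at_k; have tc : t = c k by lra.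
exists k; apply/funext => a; apply: (mulfI ck).
by have := congr1 (fun f => f a) ex; rewrite /= tc => <-.
Qed.

Definition family : set ('I_m.+1 -> R) :=
  [set nu | (exists i j : 'I_m.+1,
               [/\ val i = 0%N, val j = 1%N &
                   nu = (fun a => delta j a - delta i a)])
         \/ (exists i j k : 'I_m.+1,
               [/\ val j = (val i).+1, val k = (val j).+1 &
                   nu = (fun a =>
                     (alpha k - alpha j) / (alpha k - alpha i) * delta i a
                     + (alpha j - alpha i) / (alpha k - alpha i) * delta k a
                     - delta j a)])].

Lemma delta_inord n (a : 'I_m.+1) : (n <= m)%N -> delta (inord n) a = dN n a.
Proof. by move=> hn; rewrite /delta /dN eq_inord. Qed.

Lemma gen_in_family (k : 'I_m) : family (gen k).
Proof.
have hk := ltn_ord k; have [k0|k0] := eqVneq (k : nat) 0%N.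
  left; exists (inord 0), (inord 1); split; rewrite /= ?inordK //; try lia.
  by apply/funext => a; rewrite /gen k0 /= !delta_inord //; lia.
right; exists (inord k.-1), (inord k), (inord k.+1).
split; rewrite /= ?inordK //; try lia.
by apply/funext => a; rewrite /gen (negbTE k0) !delta_inord //; lia.
Qed.

Lemma family_gen nu : family nu -> exists k : 'I_m, nu = gen k.
Proof.
case=> [[i [j [hi hj ->]]]|[i [j [k [hj hk ->]]]]].
  have m0 : (0 < m)%N by have := ltn_ord j; rewrite [nat_of_ord j]hj.
  exists (Ordinal m0); apply/funext => a.
  by rewrite /gen /= /delta /dN -!val_eqE hi hj.
have hjm : (j < m)%N by have := ltn_ord k; rewrite [nat_of_ord k]hk.
exists (Ordinal hjm); apply/funext => a; rewrite /gen /= hj /=.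
have ei : inord (val i) = i by rewrite inord_val.
have ek : inord (val i).+2 = k by rewrite -hj -hk inord_val.
have ej : inord (val i).+1 = j by rewrite -hj inord_val.
by rewrite /al ei ej ek /delta /dN -!val_eqE hk hj.
Qed.

Theorem Lambda_star_halfline : Lambda_star X alpha = family.
Proof.
apply/seteqP; split => nu.
  by move=> /Lambda_star_gen [k ->]; exact: gen_in_family.
by move=> /family_gen [k ->]; split; [exact: gen_Lambda | exact: gen_extreme].
Qed.

End HalfLineCircuits.

Theorem mainTheorem20 (R : realType) (m : nat) (alpha : 'I_m -> R)
  (hm : (2 <= m)%N)
  (halpha : forall i j : 'I_m, (i < j)%N -> alpha i < alpha j) :
  Lambda_star [set x : R | 0 <= x] alpha =
  [set nu | (exists i j : 'I_m,
               [/\ val i = 0%N, val j = 1%N &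
                   nu = (fun a => delta j a - delta i a)])
         \/ (exists i j k : 'I_m,
               [/\ val j = (val i).+1, val k = (val j).+1 &
                   nu = (fun a =>
                     (alpha k - alpha j) / (alpha k - alpha i) * delta i a
                     + (alpha j - alpha i) / (alpha k - alpha i) * delta k a
                     - delta j a)])].
Proof.
case: m alpha hm halpha => [//|m] alpha _ halpha.
exact: Lambda_star_halfline.
Qed.
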